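(* Let $M$ be a monoid, and let $M^0$ be the monoid obtained from $M$ by adjoining a new element $0$ which acts as a zero element. Then $M$ is strongly hyperbolic if and only if $M^0$ is strongly hyperbolic.
   Context: Directed graphs may have loops and multiple edges; $d(u,v)$ is the length of a shortest directed path from $u$ to $v$ ($\infty$ if none). Out-ball $\overrightarrow{\mathcal{B}}_r(x)=\{y : d(x,y)\le r\}$, in-ball $\overleftarrow{\mathcal{B}}_r(x)=\{y : d(y,x)\le r\}$, extended to sets by union. A path $[x_0,\dots,x_n]$ is a geodesic if $n=d(x_0,x_n)$. A directed geodesic triangle is an ordered triple $(p,q,r)$ of geodesics with the end of $p$ equal to the start of $q$ and $p\circ q$ having the same start and end as $r$; it is $\delta$-thin if every vertex of $r$ lies in $\overrightarrow{\mathcal{B}}_\delta(p)\cup\overleftarrow{\mathcal{B}}_\delta(q)$, every vertex of $p$ lies in $\overrightarrow{\mathcal{B}}_\delta(r)\cup\overleftarrow{\mathcal{B}}_\delta(q)$, and every vertex of $q$ lies in $\overrightarrow{\mathcal{B}}_\delta(p)\cup\overleftarrow{\mathcal{B}}_\delta(r)$. A directed graph is strongly $\delta$-hyperbolic if all its directed geodesic triangles are $\delta$-thin. A monoid $M$ is strongly hyperbolic if there exist a finite generating set $A$ and $\delta\ge0$ such that its right Cayley graph w.r.t. $A$ (vertex set $M$, an edge $m\to n$ for each $a\in A$ with $ma=n$) is strongly $\delta$-hyperbolic. *)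

From Stdlib Require Import List Arith.
Import ListNotations.

Section Graph.
Variables (V : Type) (E : V -> V -> Prop).

(* A directed path [x; y1; ...; yn] is encoded by its start x and the list
   l = [y1; ...; yn] of subsequent vertices; each consecutive pair is an edge.
   Its length is length l, its end is last l x, its vertices are x :: l. *)
Fixpoint is_path (x : V) (l : list V) : Prop :=
  match l with
  | nil => True
  | y :: l' => E x y /\ is_path y l'
  end.

Definition path_end (x : V) (l : list V) : V := last l x.

Definition dist_le (u v : V) (n : nat) : Prop :=
  exists l, is_path u l /\ path_end u l = v /\ length l <= n.

Definition geodesic (x : V) (l : list V) : Prop :=
  is_path x l /\
  forall l', is_path x l' -> path_end x l' = path_end x l -> length l <= length l'.

Definition in_out_ball (d : nat) (x : V) (l : list V) (y : V) : Prop :=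
  exists v, In v (x :: l) /\ dist_le v y d.

Definition in_in_ball (d : nat) (x : V) (l : list V) (y : V) : Prop :=
  exists v, In v (x :: l) /\ dist_le y v d.

Definition geodesic_triangle (x : V) (lp lq lr : list V) : Prop :=
  geodesic x lp /\ geodesic (path_end x lp) lq /\ geodesic x lr /\
  path_end x lr = path_end (path_end x lp) lq.

Definition thin_triangle (d : nat) (x : V) (lp lq lr : list V) : Prop :=
  let y := path_end x lp in
  (forall v, In v (x :: lr) -> in_out_ball d x lp v \/ in_in_ball d y lq v) /\
  (forall v, In v (x :: lp) -> in_out_ball d x lr v \/ in_in_ball d y lq v) /\
  (forall v, In v (y :: lq) -> in_out_ball d x lp v \/ in_in_ball d x lr v).

Definition strongly_hyperbolic_graph (d : nat) : Prop :=
  forall x lp lq lr, geodesic_triangle x lp lq lr -> thin_triangle d x lp lq lr.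

End Graph.

Arguments is_path {V} E x l.
Arguments path_end {V} x l.
Arguments dist_le {V} E u v n.
Arguments geodesic {V} E x l.
Arguments in_out_ball {V} E d x l y.
Arguments in_in_ball {V} E d x l y.
Arguments geodesic_triangle {V} E x lp lq lr.
Arguments thin_triangle {V} E d x lp lq lr.
Arguments strongly_hyperbolic_graph {V} E d.

Definition is_monoid {M : Type} (mul : M -> M -> M) (one : M) : Prop :=
  (forall a b c, mul a (mul b c) = mul (mul a b) c) /\
  (forall a, mul one a = a) /\ (forall a, mul a one = a).

Definition generates {M : Type} (mul : M -> M -> M) (one : M) (A : list M) : Prop :=
  forall m, exists w, (forall a, In a w -> In a A) /\ fold_right mul one w = m.

Definition cayley_edge {M : Type} (mul : M -> M -> M) (A : list M) (m n : M) : Prop :=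
  exists a, In a A /\ mul m a = n.

Definition strongly_hyperbolic_monoid {M : Type} (mul : M -> M -> M) (one : M) : Prop :=
  exists (A : list M) (d : nat),
    generates mul one A /\ strongly_hyperbolic_graph (cayley_edge mul A) d.

(* M^0 : adjoin a new zero element (None) to M. *)
Definition mul0 {M : Type} (mul : M -> M -> M) (a b : option M) : option M :=
  match a, b with
  | Some x, Some y => Some (mul x y)
  | _, _ => None
  end.

Definition one0 {M : Type} (one : M) : option M := Some one.

(* In the Cayley graph of M^0 with respect to A ∪ {0}, the vertex 0 is a sink
   reached from every vertex by one edge, and the subgraph on M is the Cayley
   graph of M with respect to A.  Paths between elements of M therefore never
   visit 0, so geodesic triangles with vertices in M are the same in both
   graphs, while a triangle whose third side ends at 0 is 1-thin because every
   vertex lies within distance 1 of that endpoint.  Conversely, dropping 0 from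
   a generating set of M^0 gives a generating set of M whose Cayley graph is
   again the restriction to M. *)

From Stdlib Require Import List Arith Lia.
Import ListNotations.

Lemma path_end_cons {V : Type} (x y : V) (l : list V) :
  path_end x (y :: l) = path_end y l.
Proof.
  unfold path_end. revert x y. induction l as [|z l IH]; intros x y; [reflexivity|].
  change (last (z :: l) x = last (z :: l) y). now rewrite !IH.
Qed.

Lemma path_end_In {V : Type} (x : V) (l : list V) : In (path_end x l) (x :: l).
Proof.
  revert x. induction l as [|y l IH]; intros x; [now left|].
  rewrite path_end_cons. right. apply IH.
Qed.

Lemma dist_le_refl {V : Type} (E : V -> V -> Prop) (v : V) (n : nat) :
  dist_le E v v n.
Proof. exists []. repeat split. apply Nat.le_0_l. Qed.

Lemma dist_le_mono {V : Type} (E : V -> V -> Prop) (u v : V) (n m : nat) :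
  n <= m -> dist_le E u v n -> dist_le E u v m.
Proof. intros Hnm [l [Hl [Hend Hlen]]]. exists l. repeat split; auto. lia. Qed.

Lemma thin_triangle_mono {V : Type} (E : V -> V -> Prop) (d d' : nat)
    (x : V) (lp lq lr : list V) :
  d <= d' -> thin_triangle E d x lp lq lr -> thin_triangle E d' x lp lq lr.
Proof.
  intros Hd [Hr [Hp Hq]].
  assert (Hout : forall a l v, in_out_ball E d a l v -> in_out_ball E d' a l v).
  { intros a l v [w [Hw Hdist]]. exists w. split; [exact Hw|].
    exact (dist_le_mono E w v d d' Hd Hdist). }
  assert (Hin : forall a l v, in_in_ball E d a l v -> in_in_ball E d' a l v).
  { intros a l v [w [Hw Hdist]]. exists w. split; [exact Hw|].
    exact (dist_le_mono E v w d d' Hd Hdist). }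
  split; [|split]; intros v Hv;
    [destruct (Hr v Hv) | destruct (Hp v Hv) | destruct (Hq v Hv)]; auto.
Qed.

Lemma thin_triangle_of_sink_end {V : Type} (E : V -> V -> Prop) (d : nat)
    (x : V) (lp lq lr : list V) :
  (forall v, dist_le E v (path_end x lr) d) ->
  geodesic_triangle E x lp lq lr -> thin_triangle E d x lp lq lr.
Proof.
  intros Hnear [_ [_ [_ Hend]]].
  assert (Hq : forall v, in_in_ball E d (path_end x lp) lq v).
  { intros v. exists (path_end x lr). split; [|apply Hnear].
    rewrite Hend. apply path_end_In. }
  assert (Hr : forall v, in_in_ball E d x lr v).
  { intros v. exists (path_end x lr). split; [apply path_end_In | apply Hnear]. }
  split; [|split]; intros v _; right; auto.
Qed.

Section SinkExtension.

Variables (V : Type) (E : V -> V -> Prop) (E0 : option V -> option V -> Prop).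
Hypothesis E0_Some : forall a b, E0 (Some a) (Some b) <-> E a b.
Hypothesis E0_None : forall w, E0 None w -> w = None.

Lemma path_end_from_None (l : list (option V)) :
  is_path E0 None l -> path_end None l = None.
Proof.
  induction l as [|w l IH]; [reflexivity|]. intros [Hw Hl].
  apply E0_None in Hw. subst w. rewrite path_end_cons. exact (IH Hl).
Qed.

Lemma path_end_map_Some (x : V) (l : list V) :
  path_end (Some x) (map Some l) = Some (path_end x l).
Proof.
  revert x. induction l as [|y l IH]; intros x; [reflexivity|].
  simpl map. rewrite !path_end_cons. apply IH.
Qed.

Lemma is_path_map_Some (x : V) (l : list V) :
  is_path E0 (Some x) (map Some l) <-> is_path E x l.
Proof.
  revert x. induction l as [|y l IH]; intros x; [easy|].
  simpl. now rewrite E0_Some, IH.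
Qed.

Lemma is_path_to_Some (x0 : option V) (l0 : list (option V)) (z : V) :
  is_path E0 x0 l0 -> path_end x0 l0 = Some z ->
  exists x l, x0 = Some x /\ l0 = map Some l /\ is_path E x l.
Proof.
  revert x0. induction l0 as [|w l0 IH]; intros x0 Hpath Hend.
  - exists z, []. repeat split. exact Hend.
  - destruct Hpath as [Hw Hl]. rewrite path_end_cons in Hend.
    destruct (IH w Hl Hend) as [y [l [-> [-> Hyl]]]].
    destruct x0 as [x|]; [|discriminate (E0_None _ Hw)].
    exists x, (y :: l). repeat split; auto. apply E0_Some, Hw.
Qed.

Lemma dist_le_Some (u v : V) (n : nat) :
  dist_le E0 (Some u) (Some v) n <-> dist_le E u v n.
Proof.
  split.
  - intros [l0 [Hpath [Hend Hlen]]].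
    destruct (is_path_to_Some _ _ _ Hpath Hend) as [x [l [Hx [-> Hl]]]].
    injection Hx as <-. rewrite path_end_map_Some in Hend. injection Hend as Hend.
    rewrite length_map in Hlen. now exists l.
  - intros [l [Hpath [Hend Hlen]]]. exists (map Some l).
    rewrite path_end_map_Some, length_map, Hend.
    repeat split; auto. apply is_path_map_Some, Hpath.
Qed.

Lemma geodesic_map_Some (x : V) (l : list V) :
  geodesic E0 (Some x) (map Some l) <-> geodesic E x l.
Proof.
  split.
  - intros [Hpath Hmin]. split.
    + apply is_path_map_Some, Hpath.
    + intros l' Hpath' Hend.
      specialize (Hmin (map Some l') (proj2 (is_path_map_Some _ _) Hpath')).
      rewrite !path_end_map_Some, !length_map, Hend in Hmin. now apply Hmin.
  - intros [Hpath Hmin]. split; [apply is_path_map_Some, Hpath|].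
    intros l0 Hpath0 Hend. rewrite path_end_map_Some in Hend.
    destruct (is_path_to_Some _ _ _ Hpath0 Hend) as [x' [l' [Hx [-> Hpath']]]].
    injection Hx as <-. rewrite path_end_map_Some in Hend. injection Hend as Hend.
    rewrite !length_map. exact (Hmin l' Hpath' Hend).
Qed.

Lemma In_map_Some_cons (x : V) (l : list V) (w : option V) :
  In w (Some x :: map Some l) <-> exists v, w = Some v /\ In v (x :: l).
Proof.
  change (Some x :: map Some l) with (map Some (x :: l)). rewrite in_map_iff.
  split; intros [v [Hv Hin]]; exists v; auto.
Qed.

Lemma in_out_ball_Some (d : nat) (x : V) (l : list V) (y : V) :
  in_out_ball E0 d (Some x) (map Some l) (Some y) <-> in_out_ball E d x l y.
Proof.
  unfold in_out_ball. split.
  - intros [w [Hw Hdist]]. apply In_map_Some_cons in Hw as [v [-> Hv]].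
    exists v. split; [exact Hv | apply dist_le_Some, Hdist].
  - intros [v [Hv Hdist]]. exists (Some v). split.
    + apply In_map_Some_cons. now exists v.
    + apply dist_le_Some, Hdist.
Qed.

Lemma in_in_ball_Some (d : nat) (x : V) (l : list V) (y : V) :
  in_in_ball E0 d (Some x) (map Some l) (Some y) <-> in_in_ball E d x l y.
Proof.
  unfold in_in_ball. split.
  - intros [w [Hw Hdist]]. apply In_map_Some_cons in Hw as [v [-> Hv]].
    exists v. split; [exact Hv | apply dist_le_Some, Hdist].
  - intros [v [Hv Hdist]]. exists (Some v). split.
    + apply In_map_Some_cons. now exists v.
    + apply dist_le_Some, Hdist.
Qed.

Lemma forall_In_map_Some (P : option V -> Prop) (Q : V -> Prop) (x : V) (l : list V) :
  (forall v, P (Some v) <-> Q v) ->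
  (forall w, In w (Some x :: map Some l) -> P w) <-> (forall v, In v (x :: l) -> Q v).
Proof.
  intros HPQ. split.
  - intros H v Hv. apply HPQ, H, In_map_Some_cons. now exists v.
  - intros H w Hw. apply In_map_Some_cons in Hw as [v [-> Hv]]. apply HPQ, H, Hv.
Qed.

Lemma thin_triangle_map_Some (d : nat) (x : V) (lp lq lr : list V) :
  thin_triangle E0 d (Some x) (map Some lp) (map Some lq) (map Some lr) <->
  thin_triangle E d x lp lq lr.
Proof.
  unfold thin_triangle. rewrite path_end_map_Some.
  assert (Hball : forall (l1 : list V) (y1 : V) (l2 : list V) (v : V),
    in_out_ball E0 d (Some x) (map Some l1) (Some v) \/
      in_in_ball E0 d (Some y1) (map Some l2) (Some v) <->
    in_out_ball E d x l1 v \/ in_in_ball E d y1 l2 v).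
  { intros. now rewrite in_out_ball_Some, in_in_ball_Some. }
  rewrite (forall_In_map_Some _ _ x lr (Hball lp _ lq)),
    (forall_In_map_Some _ _ x lp (Hball lr _ lq)),
    (forall_In_map_Some _ _ _ lq (Hball lp x lr)).
  reflexivity.
Qed.

Lemma geodesic_triangle_map_Some (x : V) (lp lq lr : list V) :
  geodesic_triangle E0 (Some x) (map Some lp) (map Some lq) (map Some lr) <->
  geodesic_triangle E x lp lq lr.
Proof.
  unfold geodesic_triangle. rewrite !path_end_map_Some, !geodesic_map_Some.
  split; intros (Hp & Hq & Hr & Hend); (split; [|split; [|split]]); auto; congruence.
Qed.

Lemma strongly_hyperbolic_restrict (d : nat) :
  strongly_hyperbolic_graph E0 d -> strongly_hyperbolic_graph E d.
Proof.
  intros Hhyp x lp lq lr Htri.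
  apply thin_triangle_map_Some, Hhyp, geodesic_triangle_map_Some, Htri.
Qed.

Lemma thin_triangle_end_Some (d : nat) (x0 : option V) (lp0 lq0 lr0 : list (option V))
    (z : V) :
  strongly_hyperbolic_graph E d -> geodesic_triangle E0 x0 lp0 lq0 lr0 ->
  path_end x0 lr0 = Some z -> thin_triangle E0 d x0 lp0 lq0 lr0.
Proof.
  intros Hhyp Htri Hz. pose proof Htri as [[Hp _] [[Hq _] [[Hr _] Hend]]].
  destruct (is_path_to_Some _ _ _ Hr Hz) as [x [lr [-> [-> _]]]].
  rewrite Hend in Hz.
  destruct (path_end (Some x) lp0) as [y|] eqn:Hy.
  2: { now rewrite path_end_from_None in Hz. }
  destruct (is_path_to_Some _ _ _ Hp Hy) as [x' [lp [Hx [-> _]]]].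
  injection Hx as <-. rewrite path_end_map_Some in Hy. injection Hy as <-.
  destruct (is_path_to_Some _ _ _ Hq Hz) as [y [lq [Hy [-> _]]]].
  injection Hy as <-.
  apply thin_triangle_map_Some, Hhyp, geodesic_triangle_map_Some, Htri.
Qed.

End SinkExtension.

Fixpoint somes {T : Type} (l : list (option T)) : list T :=
  match l with
  | [] => []
  | Some a :: l' => a :: somes l'
  | None :: l' => somes l'
  end.

Lemma In_somes {T : Type} (l : list (option T)) (a : T) :
  In a (somes l) <-> In (Some a) l.
Proof.
  induction l as [|[b|] l IH]; simpl; [tauto| |].
  - rewrite IH. split; intros [H|H]; auto; left; congruence.
  - rewrite IH. split; [auto | intros [H|H]; [discriminate | exact H]].
Qed.

Lemma somes_map_Some {T : Type} (l : list T) : somes (map Some l) = l.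
Proof. induction l as [|a l IH]; simpl; congruence. Qed.

Section Cayley.

Variables (M : Type) (mul : M -> M -> M) (one : M).

Lemma cayley_edge_mul0_None (A0 : list (option M)) (w : option M) :
  cayley_edge (mul0 mul) A0 None w -> w = None.
Proof. now intros [a [_ <-]]. Qed.

Lemma cayley_edge_mul0_Some (A0 : list (option M)) (m n : M) :
  cayley_edge (mul0 mul) A0 (Some m) (Some n) <-> cayley_edge mul (somes A0) m n.
Proof.
  split.
  - intros [[a|] [Ha Hmn]]; [|discriminate].
    injection Hmn as Hmn. exists a. now rewrite In_somes.
  - intros [a [Ha Hmn]]. exists (Some a). rewrite <- In_somes. simpl. now rewrite Hmn.
Qed.

Lemma fold_right_mul0_map_Some (w : list M) :
  fold_right (mul0 mul) (one0 one) (map Some w) = Some (fold_right mul one w).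
Proof. induction w as [|a w IH]; simpl; [reflexivity | now rewrite IH]. Qed.

Lemma fold_right_mul0_Some (w0 : list (option M)) (m : M) :
  fold_right (mul0 mul) (one0 one) w0 = Some m ->
  exists w, w0 = map Some w /\ fold_right mul one w = m.
Proof.
  revert m. induction w0 as [|[a|] w0 IH]; intros m Hm; simpl in Hm.
  - injection Hm as <-. now exists [].
  - destruct (fold_right (mul0 mul) (one0 one) w0) as [m'|]; [|discriminate].
    injection Hm as <-. destruct (IH m' eq_refl) as [w [-> <-]].
    now exists (a :: w).
  - discriminate.
Qed.

Lemma generates_mul0 (A : list M) :
  generates mul one A -> generates (mul0 mul) (one0 one) (None :: map Some A).
Proof.
  intros Hgen [m|].
  - destruct (Hgen m) as [w [Hw <-]]. exists (map Some w).
    split; [|apply fold_right_mul0_map_Some].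
    intros a Ha. apply in_map_iff in Ha as [b [<- Hb]]. right. now apply in_map, Hw.
  - exists [None]. split; [|reflexivity]. intros a [<-|[]]. now left.
Qed.

Lemma generates_somes (A0 : list (option M)) :
  generates (mul0 mul) (one0 one) A0 -> generates mul one (somes A0).
Proof.
  intros Hgen m. destruct (Hgen (Some m)) as [w0 [Hw0 Hm]].
  destruct (fold_right_mul0_Some w0 m Hm) as [w [-> Hw]].
  exists w. split; [|exact Hw]. intros a Ha. apply In_somes, Hw0, in_map, Ha.
Qed.

Lemma strongly_hyperbolic_graph_mul0 (A : list M) (d : nat) :
  strongly_hyperbolic_graph (cayley_edge mul A) d ->
  strongly_hyperbolic_graph (cayley_edge (mul0 mul) (None :: map Some A)) (S d).
Proof.
  set (E0 := cayley_edge (mul0 mul) (None :: map Some A)).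
  assert (E0_Some : forall m n, E0 (Some m) (Some n) <-> cayley_edge mul A m n).
  { intros m n. unfold E0. rewrite cayley_edge_mul0_Some. simpl.
    now rewrite somes_map_Some. }
  intros Hhyp x lp lq lr Htri.
  destruct (path_end x lr) as [z|] eqn:Hend.
  - apply (thin_triangle_mono _ d); [apply Nat.le_succ_diag_r|].
    exact (thin_triangle_end_Some M _ E0 E0_Some (cayley_edge_mul0_None _)
             d x lp lq lr z Hhyp Htri Hend).
  - apply thin_triangle_of_sink_end; [|exact Htri]. rewrite Hend.
    intros [m|]; [|apply dist_le_refl].
    exists [None]. repeat split; [|apply le_n_S, Nat.le_0_l].
    exists None. split; [now left | reflexivity].
Qed.

Lemma strongly_hyperbolic_graph_somes (A0 : list (option M)) (d : nat) :
  strongly_hyperbolic_graph (cayley_edge (mul0 mul) A0) d ->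
  strongly_hyperbolic_graph (cayley_edge mul (somes A0)) d.
Proof.
  apply strongly_hyperbolic_restrict.
  - apply cayley_edge_mul0_Some.
  - apply cayley_edge_mul0_None.
Qed.

End Cayley.

Theorem proposition4p7 (M : Type) (mul : M -> M -> M) (one : M)
  (HM : is_monoid mul one) :
  strongly_hyperbolic_monoid mul one <->
  strongly_hyperbolic_monoid (mul0 mul) (one0 one).
Proof.
  split.
  - intros [A [d [Hgen Hhyp]]]. exists (None :: map Some A), (S d).
    split; [apply generates_mul0 | apply strongly_hyperbolic_graph_mul0]; assumption.
  - intros [A0 [d [Hgen Hhyp]]]. exists (somes A0), d.
    split; [apply generates_somes | apply strongly_hyperbolic_graph_somes]; assumption.
Qed.
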